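(* Let $l_1,l_2,l_3$ be affine functions on $\mathbb{F}_{p^r}$ with $l_1$ and $l_2$ permutations, write $l_2(x)=L_2(x)+c_2$ with $L_2$ additive, and let $d(x)$ be a Dembowski–Ostrom polynomial over $\mathbb{F}_{p^r}$. If $A(x)$ is an Alltop polynomial on $\mathbb{F}_{p^r}$ and $A'(x)=l_1(A(l_2(x)))+d(x)+l_3(x)$, then $A'(x)$ is an Alltop polynomial, and for every $a\in\mathbb{F}_{p^r}^*$ there exists $b\in\mathbb{F}_{p^r}^*$ (namely $b$ with $L_2(b)=a$) such that $\Delta_{A,a}(x)$ is EA-equivalent to $\Delta_{A',b}(x)$.
   Context: For $f:\mathbb{F}_{p^r}\to\mathbb{F}_{p^r}$ and $a\in\mathbb{F}_{p^r}$, $\Delta_{f,a}(x)=f(x+a)-f(x)$. A function $f$ is planar if for every $a\in\mathbb{F}_{p^r}^*$ the map $x\mapsto\Delta_{f,a}(x)$ is a bijection; $A$ is an Alltop polynomial if $\Delta_{A,a}$ is planar for every $a\in\mathbb{F}_{p^r}^*$. A function $L$ is additive if $L(x+y)=L(x)+L(y)$; an affine function is an additive function plus a constant. A Dembowski–Ostrom polynomial is one of the form $\sum_{i,j=0}^{r-1}a_{ij}x^{p^i+p^j}$, $a_{ij}\in\mathbb{F}_{p^r}$. Two functions $f_1,f_2$ are EA-equivalent if there exist affine $m_1,m_2,m_3$ with $m_1,m_2$ permutations such that $f_1=m_1\circ f_2\circ m_2+m_3$. *)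

(* The field F_{p^r} is an abstract finite field F of
   characteristic p with #|F| = p^r. *)
From mathcomp Require Import all_boot all_order all_algebra.
Set Implicit Arguments. Unset Strict Implicit. Unset Printing Implicit Defensive.
Import GRing.Theory.
Local Open Scope ring_scope.

Section Defs.
Variable F : finFieldType.

Definition Delta (f : F -> F) (a : F) : F -> F := fun x => f (x + a) - f x.

Definition planar (f : F -> F) : Prop :=
  forall a : F, a != 0 -> bijective (Delta f a).

Definition alltop (A : F -> F) : Prop :=
  forall a : F, a != 0 -> planar (Delta A a).

Definition additive_fun (L : F -> F) : Prop :=
  forall x y : F, L (x + y) = L x + L y.

Definition affine_fun (m : F -> F) : Prop :=
  exists L : F -> F, exists c : F, additive_fun L /\ forall x, m x = L x + c.

Definition DO_poly (p r : nat) (d : F -> F) : Prop :=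
  exists a : 'I_r -> 'I_r -> F,
    forall x : F, d x = \sum_(i < r) \sum_(j < r) a i j * x ^+ (p ^ i + p ^ j)%N.

Definition EA_equiv (f1 f2 : F -> F) : Prop :=
  exists m1 m2 m3 : F -> F,
    [/\ affine_fun m1, affine_fun m2, affine_fun m3,
        bijective m1 /\ bijective m2 &
        forall x, f1 x = m1 (f2 (m2 x)) + m3 x].
End Defs.

(** Write [l1 = L1 + c1] and [l2 = L2 + c2].  The derivative of [A'] in
    direction [b] is [L1 (Delta A (L2 b) (l2 x))] plus the derivative of
    [d + l3 + c1], and the latter is affine because [d] is a quadratic form in
    the Frobenius powers of [x].  Hence [Delta A' b] is obtained from
    [Delta A (L2 b)] by bijective affine maps plus an affine term: this is an
    EA-equivalence, and it transports planarity because the derivatives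
    of both sides are again related by bijective affine maps. *)
From mathcomp Require Import all_boot all_order all_algebra.
From mathcomp Require Import ring.
Import GRing.Theory.
Local Open Scope ring_scope.
Set Implicit Arguments. Unset Strict Implicit.

Section AffineFunctions.
Variable F : finFieldType.
Implicit Types (f g L m : F -> F) (b c x y : F).

Lemma additive_fun0 L : additive_fun L -> L 0 = 0.
Proof. by move=> hL; apply: (@addrI _ (L 0)); rewrite -hL !addr0. Qed.

Lemma additive_funN L x : additive_fun L -> L (- x) = - L x.
Proof. by move=> hL; apply/eqP; rewrite -addr_eq0 -hL addNr additive_fun0. Qed.

Lemma additive_funB L x y : additive_fun L -> L (x - y) = L x - L y.
Proof. by move=> hL; rewrite hL additive_funN. Qed.

Lemma additive_fun_eq0 L x : additive_fun L -> injective L -> (L x == 0) = (x == 0).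
Proof.
by move=> hL injL; rewrite -{1}(additive_fun0 hL) (inj_eq injL).
Qed.

Lemma additive_fun_can L Li : additive_fun L -> cancel L Li -> cancel Li L ->
  additive_fun Li.
Proof. by move=> hL LK LiK x y; apply: (can_inj LK); rewrite hL !LiK. Qed.

Lemma bijective_additive_part m L c : bijective m -> (forall x, m x = L x + c) ->
  bijective L.
Proof.
move=> bm mE; have : bijective ((fun y => y - c) \o m).
  by apply: bij_comp => //; exists (fun y => y + c) => y; rewrite ?subrK ?addrK.
by move/eq_bij; apply=> x /=; rewrite mE addrK.
Qed.

Lemma additive_affine_fun L : additive_fun L -> affine_fun L.
Proof. by move=> hL; exists L, 0; split=> // x; rewrite addr0. Qed.

Lemma eq_affine_fun f g : f =1 g -> affine_fun f -> affine_fun g.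
Proof. by move=> fg [L [c [hL fE]]]; exists L, c; split=> // x; rewrite -fg. Qed.

Lemma affine_fun_cst c : affine_fun (fun _ => c).
Proof. by exists (fun _ => 0), c; split=> [x y|x]; rewrite ?addr0 ?add0r. Qed.

Lemma affine_funD f g : affine_fun f -> affine_fun g ->
  affine_fun (fun x => f x + g x).
Proof.
move=> [L [c [hL fE]]] [M [e [hM gE]]].
exists (fun x => L x + M x), (c + e); split=> [x y|x]; last by rewrite fE gE; ring.
by rewrite hL hM; ring.
Qed.

Lemma affine_funN f : affine_fun f -> affine_fun (fun x => - f x).
Proof.
move=> [L [c [hL fE]]]; exists (fun x => - L x), (- c).
by split=> [x y|x]; rewrite ?hL ?fE opprD.
Qed.

Lemma affine_fun_comp f g : affine_fun f -> affine_fun g -> affine_fun (f \o g).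
Proof.
move=> [L [c [hL fE]]] [M [e [hM gE]]].
exists (L \o M), (L e + c); split=> [x y|x] /=; first by rewrite hM hL.
by rewrite fE gE hL addrA.
Qed.

Lemma affine_fun_can m mi : affine_fun m -> cancel m mi -> cancel mi m ->
  affine_fun mi.
Proof.
move=> [L [c [hL mE]]] mK miK.
have [Li LK LiK] := bijective_additive_part (Bijective mK miK) mE.
exists Li, (- Li c); split=> [|y]; first exact: additive_fun_can LK LiK.
apply: (can_inj mK); rewrite miK mE -(additive_funB _ _ (additive_fun_can hL LK LiK)).
by rewrite LiK subrK.
Qed.

Lemma affine_fun_Delta m b : affine_fun m -> affine_fun (Delta m b).
Proof.
move=> [L [c [hL mE]]]; exists (fun _ => 0), (L b).
by split=> [x y|x]; rewrite ?addr0 // add0r /Delta !mE hL; ring.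
Qed.

Lemma Delta_add f g b x :
  Delta (fun y => f y + g y) b x = Delta f b x + Delta g b x.
Proof. by rewrite /Delta; ring. Qed.

(* Frobenius additivity of [x ^+ p ^ i] makes each monomial
   [x ^+ (p ^ i + p ^ j)] a bilinear form in [x], so its derivative is affine. *)
Lemma Delta_DO_poly p r d b : prime p -> p \in [pchar F] -> DO_poly p r d ->
  affine_fun (Delta d b).
Proof.
move=> hp hchar [a dE].
have frobD i x y : (x + y) ^+ (p ^ i) = x ^+ (p ^ i) + y ^+ (p ^ i).
  by apply: exprDn_pchar; rewrite pnatX (pnatE _ hp) hchar.
exists (fun x => \sum_(i < r) \sum_(j < r)
   a i j * (x ^+ (p ^ i) * b ^+ (p ^ j) + b ^+ (p ^ i) * x ^+ (p ^ j))).
exists (d b); split=> [x y|x].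
  rewrite -big_split /=; apply: eq_bigr => i _.
  by rewrite -big_split /=; apply: eq_bigr => j _; rewrite !frobD; ring.
rewrite /Delta !dE -sumrB -big_split /=; apply: eq_bigr => i _.
rewrite -sumrB -big_split /=; apply: eq_bigr => j _.
by rewrite !exprD !frobD; ring.
Qed.

End AffineFunctions.

Section AffineTransform.
Variables (F : finFieldType) (L1 L2 l2 : F -> F) (c2 : F).
Hypotheses (hL1 : additive_fun L1) (bL1 : bijective L1).
Hypotheses (hL2 : additive_fun L2) (bl2 : bijective l2).
Hypothesis l2E : forall x, l2 x = L2 x + c2.
Implicit Types (f g : F -> F) (b x : F).

Lemma Delta_affine_transform f g (f' : F -> F) :
  (forall x, f' x = L1 (f (l2 x)) + g x) ->
  forall b x, Delta f' b x = L1 (Delta f (L2 b) (l2 x)) + Delta g b x.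
Proof.
move=> f'E b x; rewrite /Delta !f'E !l2E hL2 (additive_funB _ _ hL1).
by rewrite [L2 x + L2 b + c2]addrAC; ring.
Qed.

Lemma planar_affine_transform f g (f' : F -> F) : affine_fun g ->
  (forall x, f' x = L1 (f (l2 x)) + g x) -> planar f -> planar f'.
Proof.
move=> [G [e [hG gE]]] f'E planar_f c c_neq0.
have injL2 : injective L2 by apply/bij_inj/(bijective_additive_part bl2 l2E).
have L2c_neq0 : L2 c != 0 by rewrite additive_fun_eq0.
have shift_bij : bijective (fun y => L1 y + G c).
  have [L1i L1K L1iK] := bL1.
  by exists (fun y => L1i (y - G c)) => y; rewrite ?addrK ?L1K ?L1iK ?subrK.
apply: (@eq_bij _ _ ((fun y => L1 y + G c) \o Delta f (L2 c) \o l2)).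
  by do 2?apply: bij_comp => //; apply: planar_f.
by move=> x /=; rewrite (Delta_affine_transform f'E) /Delta !gE hG; ring.
Qed.

Lemma EA_equiv_affine_transform f g (f' : F -> F) : affine_fun g ->
  (forall x, f' x = L1 (f (l2 x)) + g x) -> EA_equiv f f'.
Proof.
move=> affine_g f'E.
have [L1i L1K L1iK] := bL1; have [l2i l2K l2iK] := bl2.
have hL1i := additive_fun_can hL1 L1K L1iK.
have affine_l2 : affine_fun l2 by exists L2, c2.
have affine_l2i := affine_fun_can affine_l2 l2K l2iK.
exists L1i, l2i, (fun x => - L1i (g (l2i x))); split.
- exact: additive_affine_fun.
- exact: affine_l2i.
- by apply: affine_funN; do 2?apply: affine_fun_comp => //; apply: additive_affine_fun.
- by split; [exists L1 | exists l2].
- by move=> x; rewrite f'E l2iK hL1i L1K addrK.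
Qed.

End AffineTransform.

Theorem lemma5 (F : finFieldType) (p r : nat)
  (hp : prime p) (hchar : p \in [pchar F]) (hcard : #|F| = (p ^ r)%N)
  (l1 l2 l3 L2 : F -> F) (c2 : F) (d A : F -> F)
  (hl1 : affine_fun l1) (hl2 : affine_fun l2) (hl3 : affine_fun l3)
  (hl1b : bijective l1) (hl2b : bijective l2)
  (hL2 : additive_fun L2) (hl2e : forall x, l2 x = L2 x + c2)
  (hd : DO_poly p r d) (hA : alltop A) :
  let A' := fun x => l1 (A (l2 x)) + d x + l3 x in
  alltop A' /\
  forall a : F, a != 0 ->
    exists b : F, [/\ b != 0, L2 b = a & EA_equiv (Delta A a) (Delta A' b)].
Proof.
move=> A'; have [L1 [c1 [hL1 l1E]]] := hl1.
have bL1 := bijective_additive_part hl1b l1E.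
have [L2i L2K L2iK] := bijective_additive_part hl2b hl2e.
pose g x := d x + (l3 x + c1).
have affine_Dg b : affine_fun (Delta g b).
  apply: (eq_affine_fun (fun x => esym (Delta_add d (fun y => l3 y + c1) b x))).
  apply: affine_funD; first exact: Delta_DO_poly hd.
  by apply: affine_fun_Delta; apply: affine_funD hl3 (affine_fun_cst _).
have DA'E b : forall x, Delta A' b x = L1 (Delta A (L2 b) (l2 x)) + Delta g b x.
  by apply: (Delta_affine_transform hL1 hL2 hl2e) => x; rewrite /A' l1E /g; ring.
have L2_eq0 b : (L2 b == 0) = (b == 0).
  by rewrite additive_fun_eq0 //; apply: can_inj L2K.
split=> [b b_neq0 | a a_neq0].
  apply: (planar_affine_transform hL1 bL1 hL2 hl2b hl2e (affine_Dg b) (DA'E b)).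
  by apply: hA; rewrite L2_eq0.
exists (L2i a); rewrite -L2_eq0 L2iK; split=> //.
rewrite -{1}[a]L2iK.
exact: (EA_equiv_affine_transform hL1 bL1 hL2 hl2b hl2e (affine_Dg _) (DA'E _)).
Qed.
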